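(* Let $d>0$, $\mu>0$, let $J$ satisfy (J) and let $f$ satisfy (f3). Suppose there is a pair $(c_0,\phi^{c_0})\in(0,\infty)\times C^1((-\infty,0])$, with $\phi^{c_0}\ge0$ nonincreasing in $x$, satisfying $$d\int_{-\infty}^0J(x-y)\phi^{c_0}(y)\,dy-d\phi^{c_0}(x)+c_0(\phi^{c_0})'(x)+f(\phi^{c_0}(x))=0\ (x<0),\quad \phi^{c_0}(-\infty)=1,\ \phi^{c_0}(0)=0,$$ and $$c_0=\mu\int_{-\infty}^0\int_0^{+\infty}J(x-y)\phi^{c_0}(x)\,dy\,dx.$$ Then $\int_{-\infty}^0\int_0^{+\infty}J(x-y)\,dy\,dx<+\infty$.
   Context: Condition (J): $J\in C(\mathbb{R})\cap L^\infty(\mathbb{R})$, $J\ge 0$, $J(0)>0$, $\int_{\mathbb{R}}J=1$, $J$ even. Condition (f3): $f\in C^1([0,\infty))$, $f(0)=f(1)=0$, $f>0$ in $(0,1)$, $f'(0)>0>f'(1)$, $f(u)/u$ nonincreasing in $u>0$. *)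

From HB Require Import structures.
From mathcomp Require Import all_boot all_order all_algebra.
From mathcomp Require Import all_classical all_reals all_analysis.
Set Implicit Arguments. Unset Strict Implicit. Unset Printing Implicit Defensive.
Import Order.TTheory GRing.Theory Num.Theory.
Import numFieldNormedType.Exports.
Local Open Scope classical_set_scope.
Local Open Scope ring_scope.

Definition condJ (R : realType) (J : R -> R) : Prop :=
  continuous J /\
  (exists M : R, forall x : R, `|J x| <= M) /\
  (forall x : R, 0 <= J x) /\
  0 < J 0 /\
  (\int[@lebesgue_measure R]_(x in [set: R]) (J x)%:E = 1)%E /\
  (forall x : R, J (- x) = J x).

Definition condf3 (R : realType) (f f' : R -> R) : Prop :=
  ((forall u : R, 0 < u -> is_derive u 1 f (f' u)) /\
   ((h : R)^-1 * (f h - f 0)) @[h --> 0^'+] --> f' 0 /\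
   {within `[(0%R:R), +oo[, continuous f'}) /\
  f 0 = 0 /\ f 1 = 0 /\
  (forall u : R, 0 < u < 1 -> 0 < f u) /\
  0 < f' 0 /\ f' 1 < 0 /\
  (forall u v : R, 0 < u -> u <= v -> f v / v <= f u / u).

From HB Require Import structures.
From mathcomp Require Import all_boot all_order all_algebra.
From mathcomp Require Import all_classical all_reals all_analysis.
From mathcomp Require Import measurable_realfun lra.
Set Implicit Arguments. Unset Strict Implicit. Unset Printing Implicit Defensive.
Import Order.TTheory GRing.Theory Num.Theory.
Import numFieldNormedType.Exports.
Local Open Scope classical_set_scope.
Local Open Scope ring_scope.

(** With G(x) = \int_0^oo J(x - y) dy, the hypothesis on c0 reads
    c0 = mu \int_{-oo}^0 phi G, so \int_{-oo}^0 phi G is finite because mu > 0.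
    Evenness and translation invariance give G <= \int J = 1.  As phi tends to 1
    at -oo, phi >= 1/2 on some ]-oo, X[, so \int_{-oo}^X G <= 2 \int phi G,
    while \int_X^0 G <= |X|. *)

Section ge0_integral_nomeas.
Local Open Scope ereal_scope.
Context d (T : measurableType d) (R : realType) (mu : {measure set T -> \bar R}).

(* Unlike ge0_le_integral, no measurability is needed: the nonnegative integral
   is a supremum over the simple functions below the integrand. *)
Lemma ge0_le_integral_nomeas (D : set T) (f g : T -> \bar R) :
  (forall x, D x -> 0 <= f x) -> (forall x, D x -> f x <= g x) ->
  \int[mu]_(x in D) f x <= \int[mu]_(x in D) g x.
Proof.
move=> f0 fg.
have g0 x : D x -> 0 <= g x by move=> Dx; exact: le_trans (f0 x Dx) (fg x Dx).
rewrite !ge0_integralE//.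
apply: ge_ereal_sup => _ [h hf <-]; apply: ereal_sup_ubound; exists h => //= x.
exact: le_trans (hf x) (lee_restrict fg x).
Qed.

Lemma ge0_subset_integral_nomeas (A B : set T) (f : T -> \bar R) :
  A `<=` B -> (forall x, B x -> 0 <= f x) ->
  \int[mu]_(x in A) f x <= \int[mu]_(x in B) f x.
Proof.
move=> AB f0; rewrite [leLHS]integral_mkcond [leRHS]integral_mkcond.
apply: ge0_le_integral_nomeas => x _; last exact: restrict_lee.
by apply: erestrict_ge0 => y /AB; exact: f0.
Qed.

Lemma ge0_integral_lty_weight (D : set T) (G : T -> \bar R) (w : T -> R) (eps : R) :
  measurable D -> measurable_fun D G -> (forall x, D x -> 0 <= G x) ->
  (0 < eps)%R -> (forall x, D x -> eps <= w x)%R ->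
  \int[mu]_(x in D) ((w x)%:E * G x) < +oo -> \int[mu]_(x in D) G x < +oo.
Proof.
move=> mD mG G0 eps0 epsw wG_lty.
have epsG_le : eps%:E * \int[mu]_(x in D) G x <= \int[mu]_(x in D) ((w x)%:E * G x).
  rewrite -ge0_integralZl //; last by rewrite lee_fin ltW.
  apply: ge0_le_integral_nomeas => x Dx; first by rewrite mule_ge0 ?G0 // lee_fin ltW.
  by rewrite lee_wpmul2r ?G0 ?lee_fin ?epsw.
move: (le_lt_trans epsG_le wG_lty); rewrite !ltey; apply: contra_neq => ->.
by rewrite mulry gtr0_sg // mul1e.
Qed.

Lemma bounded_ge0_integral_lty (D : set T) (G : T -> \bar R) (M : R) :
  measurable D -> mu D < +oo -> (forall x, D x -> 0 <= G x <= M%:E) ->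
  \int[mu]_(x in D) G x < +oo.
Proof.
move=> mD muD GM; apply: (@le_lt_trans _ _ (\int[mu]_(x in D) (cst M%:E) x)).
  by apply: ge0_le_integral_nomeas => x /GM /andP[].
by rewrite integral_cst// ltey_eq fin_numM// ge0_fin_numE ?measure_ge0.
Qed.

End ge0_integral_nomeas.

Section integral_in_measurable.
Local Open Scope ereal_scope.
Context d1 d2 (T1 : measurableType d1) (T2 : measurableType d2) (R : realType).
Variable m2 : {sigma_finite_measure set T2 -> \bar R}.

Lemma measurable_fun_integral_in (B : set T2) (f : T1 * T2 -> \bar R) :
  measurable B -> measurable_fun setT f -> (forall z, 0 <= f z) ->
  measurable_fun setT (fun x => \int[m2]_(y in B) f (x, y)).
Proof.
move=> mB mf f0.
have -> : (fun x => \int[m2]_(y in B) f (x, y)) = fubini_F m2 (f \_ (setT `*` B)).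
  apply/funext => x; rewrite /fubini_F [LHS]integral_mkcond.
  by apply: eq_integral => y _; rewrite /patch in_setX in_setT.
apply: measurable_fun_fubini_tonelli_F.
  apply/(measurable_restrictT _ _).1; first exact: measurableX.
  exact: measurable_funS mf.
by apply: erestrict_ge0 => z _; exact: f0.
Qed.

End integral_in_measurable.

Section lebesgue_integral_real_line.
Local Open Scope ereal_scope.
Context (R : realType).
Local Notation mu := (@lebesgue_measure R).
Implicit Types J : R -> R.

Lemma ge0_integral_shift J (x : R) : continuous J -> (forall t, 0 <= J t)%R ->
  \int[mu]_y (J (y - x))%:E = \int[mu]_y (J y)%:E.
Proof.
move=> cJ J0.
have dshift : derive1 (fun y : R => y - x)%R = cst 1%R.
  by apply/funext => y; rewrite derive1E deriveB //= derive_id derive_cst subr0.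
rewrite (@increasing_ge0_integration_by_substitutionT _ (fun y : R => y - x)%R J) //.
- by apply: eq_integral => y _; rewrite dshift /= !fctE /= mulr1.
- by move=> a b ab; rewrite ltrBlDr subrK.
- by rewrite dshift; exact: cst_continuous.
- by rewrite dshift; exact: is_cvg_cst.
- by rewrite dshift; exact: is_cvg_cst.
- apply/cvgrNyPle => A; near=> y; rewrite lerBlDr.
  by near: y; apply: nbhs_ninfty_le; exact: num_real.
- apply/cvgryPge => A; near=> y; rewrite lerBrDr.
  by near: y; apply: nbhs_pinfty_ge; exact: num_real.
Unshelve. all: by end_near.
Qed.

Lemma even_kernel_integral_in_le J (A : set R) (x : R) :
  continuous J -> (forall t, 0 <= J t)%R -> (forall t, J (- t)%R = J t) ->
  \int[mu]_(y in A) (J (x - y))%:E <= \int[mu]_y (J y)%:E.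
Proof.
move=> cJ J0 Jeven.
rewrite -(ge0_integral_shift x cJ J0).
under [X in _ <= X]eq_integral do rewrite -opprB Jeven.
by apply: ge0_subset_integral_nomeas => // y _; rewrite lee_fin.
Qed.

Lemma ge0_integral_itvNyc_lty_weight (a eps M : R) (G : R -> \bar R) (w : R -> R) :
  (0 < eps)%R -> measurable_fun `]-oo, a] G ->
  (forall x, (x <= a)%R -> 0 <= G x <= M%:E) ->
  (forall x, x <= a -> 0 <= w x)%R -> (\forall x \near -oo%R, eps <= w x)%R ->
  \int[mu]_(x in `]-oo, a]) ((w x)%:E * G x) < +oo ->
  \int[mu]_(x in `]-oo, a]) G x < +oo.
Proof.
move=> eps0 mG GM w0 [b [_ epsw]] wG_lty.
pose X := Num.min b a.
have Xa : (X <= a)%R by rewrite ge_min lexx orbT.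
have G0 x : (x <= a)%R -> 0 <= G x by move=> /GM /andP[].
have wG0 x : (x <= a)%R -> 0 <= (w x)%:E * G x.
  by move=> xa; rewrite mule_ge0 ?lee_fin ?w0 ?G0.
have subXa : [set` `]-oo, X[] `<=` [set` `]-oo, a]].
  by move=> x /=; rewrite !in_itv /= => /ltW/le_trans; exact.
rewrite (@itv_bndbnd_setU _ _ _ (BLeft X)) //.
rewrite ge0_integral_setU //=; first last.
- apply/disj_set2P; apply/seteqP; split => x //= [].
  by rewrite !in_itv /= => xX /andP[/(lt_le_trans xX)]; rewrite ltxx.
- move=> x [/subXa|] /=; rewrite in_itv /=; first exact: G0.
  by move=> /andP[_]; exact: G0.
- by rewrite -itv_bndbnd_setU // bnd_simp.
apply: lte_add_pinfty.
- apply: (@ge0_integral_lty_weight _ _ _ mu _ G w eps) => //.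
  + exact: measurable_funS mG.
  + by move=> x /subXa; rewrite /= in_itv; exact: G0.
  + move=> x /=; rewrite in_itv /= => xX; apply: epsw.
    by apply: lt_le_trans xX _; rewrite ge_min lexx.
  + by apply: le_lt_trans wG_lty; apply: ge0_subset_integral_nomeas.
- have Xa_lty : mu `[X, a] < +oo.
    by rewrite lebesgue_measure_itv /=; case: ifP => _ //; rewrite -EFinB ltry.
  apply: (bounded_ge0_integral_lty _ Xa_lty (M := M)) => //.
  by move=> x /=; rewrite in_itv /= => /andP[_]; exact: GM.
Qed.

End lebesgue_integral_real_line.

Theorem lemma2p10 (R : realType) (d mu : R) (J f f' : R -> R)
  (c0 : R) (phi phi' : R -> R) :
  0 < d -> 0 < mu -> condJ J -> condf3 f f' -> 0 < c0 ->
  (* phi in C^1((-oo,0]) with derivative phi' (left derivative at 0) *)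
  (forall x : R, x < 0 -> is_derive x 1 phi (phi' x)) ->
  ((h : R)^-1 * (phi h - phi 0)) @[h --> 0^'-] --> phi' 0 ->
  {within `]-oo, (0%R:R)], continuous phi'} ->
  (* phi >= 0, nonincreasing *)
  (forall x : R, x <= 0 -> 0 <= phi x) ->
  (forall x y : R, x <= y -> y <= 0 -> phi y <= phi x) ->
  (* the traveling-wave equation *)
  (forall x : R, x < 0 ->
     d * Rintegral (@lebesgue_measure R) `]-oo, (0%R:R)] (fun y => J (x - y) * phi y)
     - d * phi x + c0 * phi' x + f (phi x) = 0) ->
  phi x @[x --> -oo%R] --> (1 : R) ->
  phi 0 = 0 ->
  (c0%:E = mu%:E *
     \int[@lebesgue_measure R]_(x in `]-oo, (0%R:R)])
        \int[@lebesgue_measure R]_(y in `[(0%R:R), +oo[) (J (x - y)%R * phi x)%R%:E)%E ->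
  (\int[@lebesgue_measure R]_(x in `]-oo, (0%R:R)])
      \int[@lebesgue_measure R]_(y in `[(0%R:R), +oo[) (J (x - y)%R)%R%:E < +oo)%E.
Proof.
move=> _ mu0 [cJ [_ [J0 [_ [J1 Jeven]]]]] _ _ _ _ _ phi0 _ _ phiNy _ c0E.
pose G x := (\int[lebesgue_measure]_(y in `[0%R, +oo[) (J (x - y))%:E)%E.
have G_ge0 x : (0 <= G x)%E by apply: integral_ge0 => y _; rewrite lee_fin.
have G_le1 x : (G x <= 1)%E by rewrite -J1 even_kernel_integral_in_le.
have mG : measurable_fun setT G.
  apply: (measurable_fun_integral_in lebesgue_measure
    (f := fun z : R * R => (J (z.1 - z.2))%:E)).
  - by [].
  - apply/measurable_EFinP/measurableT_comp; first exact: continuous_measurable_fun.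
    by apply: measurable_funB; [exact: measurable_fst | exact: measurable_snd].
  - by move=> z; rewrite lee_fin.
have inner_integralE x : x <= 0 ->
    (\int[lebesgue_measure]_(y in `[0%R, +oo[) (J (x - y) * phi x)%:E
      = (phi x)%:E * G x)%E.
  move=> x0; rewrite muleC -ge0_integralZr //=.
  - apply: measurable_funTS; apply/measurable_EFinP.
    apply: measurableT_comp; first exact: continuous_measurable_fun.
    exact: measurable_funB.
  - by move=> y _; rewrite lee_fin.
  - by rewrite lee_fin phi0.
have wG_lty : (\int[lebesgue_measure]_(x in `]-oo, 0%R]) ((phi x)%:E * G x) < +oo)%E.
  have <- : (\int[lebesgue_measure]_(x in `]-oo, 0%R])
      \int[lebesgue_measure]_(y in `[0%R, +oo[) (J (x - y) * phi x)%:E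
    = \int[lebesgue_measure]_(x in `]-oo, 0%R]) ((phi x)%:E * G x))%E.
    by apply: eq_integral => x; rewrite inE /= in_itv => /inner_integralE.
  rewrite ltey; apply/eqP => Iy.
  by move: c0E; rewrite Iy mulry gtr0_sg // mul1e.
apply: (ge0_integral_itvNyc_lty_weight (eps := 1/2) (w := phi) (M := 1)) => //.
- exact: measurable_funTS mG.
- by move=> x _; apply/andP; split; [exact: G_ge0 | exact: G_le1].
- by apply: (cvgr_ge _ phiNy); lra.
Qed.
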